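(* Assume the demand is i.i.d. with pmf $P_X$. Let $\theta^*$ be a minimizer of $\theta\mapsto I(S-X;X)$ over $\mathcal P_S$ ($X\sim P_X$, $S\sim\theta$ independent), $J^*$ the minimum value, $\xi^*(w)=\sum_{(x,s):s-x=w}P_X(x)\theta^*(s)$, and $b^*(y\mid w)=P_X(y)\theta^*(y+w)/\xi^*(w)$ for $y\in\mathcal X\cap\mathcal Y_\circ(w)$ and $0$ otherwise. Then (1) $\xi^*$ and $\theta^*$ are related by $\xi^*(w)=\sum_{(x,s):s-x=w}P_X(x)\theta^*(s)$; (2) $b^*$ is a structured policy with respect to $(\theta^*,\xi^* )$; (3) if $S_1\sim\theta^*$ and the constant-distribution policy $Y_t\sim b^*(\cdot\mid S_t-X_t)$ is used, the (infinite-horizon) leakage rate equals $J^*$. Thus $J^*$ is achievable.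
   Context: $\mathcal X=\{0,\dots,m_x\}$, $\mathcal Y=\{0,\dots,m_y\}$, $\mathcal S=\{0,\dots,m_s\}$ with $m_x\le m_y$; $\mathcal W=\{s-x:s\in\mathcal S,x\in\mathcal X\}$; $\mathcal P_S$ the pmfs on $\mathcal S$; $\mathcal Y_\circ(w)=\{y\in\mathcal Y:w+y\in\mathcal S\}$. The demand $X_1,X_2,\dots$ is i.i.d. $\sim P_X$, independent of $S_1$. Given $b(y\mid w)$ with $b(\mathcal Y_\circ(w)\mid w)=1$, the constant-distribution policy $b$ draws $Y_t\sim b(\cdot\mid W_t)$, $W_t=S_t-X_t$, and $S_{t+1}=S_t+Y_t-X_t$. Given $\theta\in\mathcal P_S$ and $\xi(w)=\sum_{(x,s):s-x=w}P_X(x)\theta(s)$, a structured policy with respect to $(\theta,\xi)$ is $b(y\mid w)=P_X(y)\theta(y+w)/\xi(w)$ for $y\in\mathcal X\cap\mathcal Y_\circ(w)$ and $0$ otherwise. The leakage rate of a policy is $L_T=\frac1TI(X^T,S_1;Y^T)$, $L_\infty=\limsup_TL_T$. *)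

From HB Require Import structures.
From mathcomp Require Import all_boot all_order all_algebra.
From mathcomp Require Import all_classical all_reals all_analysis.
Set Implicit Arguments. Unset Strict Implicit. Unset Printing Implicit Defensive.
Import Order.TTheory GRing.Theory Num.Theory.
Local Open Scope ring_scope.

(* Alphabets: X = 'I_mx.+1 = {0..mx}, Y = 'I_my.+1, S = 'I_ms.+1.
   W = {s - x} = {-mx, ..., ms} is represented by the finite type
   'I_(mx + ms).+1, the index i standing for the integer i - mx. *)
Definition Wt (mx ms : nat) := 'I_(mx + ms).+1.
Definition wval (mx ms : nat) (i : Wt mx ms) : int := (i%:Z - mx%:Z)%R.

Definition is_pmf (T : finType) (R : realType) (p : {ffun T -> R}) : Prop :=
  (forall t, 0 <= p t) /\ \sum_(t : T) p t = 1.

Definition extZ (R : realType) (m : nat) (p : {ffun 'I_m.+1 -> R}) (z : int) : R :=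
  match z with
  | Posz n => if (n < m.+1)%N then p (inord n) else 0
  | Negz _ => 0
  end.

Definition MI (R : realType) (A B : finType) (p : A -> B -> R) : R :=
  let pA := fun a => \sum_(b : B) p a b in
  let pB := fun b => \sum_(a : A) p a b in
  \sum_(a : A) \sum_(b : B)
     (if p a b == 0 then 0 else p a b * ln (p a b / (pA a * pB b))).

(* I(S - X ; X) with X ~ PX, S ~ theta independent: joint pmf of (W, X) *)
Definition Jfun (R : realType) (mx ms : nat)
    (PX : {ffun 'I_mx.+1 -> R}) (theta : {ffun 'I_ms.+1 -> R}) : R :=
  MI (fun (w : Wt mx ms) (x : 'I_mx.+1) =>
        PX x * extZ theta (wval w + x%:Z)%R).

Definition xi (R : realType) (mx ms : nat)
    (PX : {ffun 'I_mx.+1 -> R}) (theta : {ffun 'I_ms.+1 -> R}) (w : int) : R :=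
  \sum_(xs : 'I_mx.+1 * 'I_ms.+1 | ((xs.2)%:Z - (xs.1)%:Z == w)%R)
     PX xs.1 * theta xs.2.

(* y in X /\ y in Y_o(w)  (i.e. y <= mx and w + y in S) *)
Definition in_XYo (mx ms my : nat) (w : int) (y : 'I_my.+1) : bool :=
  (y <= mx)%N && (0 <= w + y%:Z)%R && (w + y%:Z <= ms%:Z)%R.

Definition structured (R : realType) (mx ms my : nat)
    (PX : {ffun 'I_mx.+1 -> R}) (theta : {ffun 'I_ms.+1 -> R})
    (xi0 : int -> R) (b : int -> 'I_my.+1 -> R) : Prop :=
  forall (w : int) (y : 'I_my.+1),
    b w y = if in_XYo mx ms w y
            then extZ PX y%:Z * extZ theta (y%:Z + w)%R / xi0 w
            else 0.

Definition bstar (R : realType) (mx ms my : nat)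
    (PX : {ffun 'I_mx.+1 -> R}) (theta : {ffun 'I_ms.+1 -> R})
    (w : int) (y : 'I_my.+1) : R :=
  if in_XYo mx ms w y
  then extZ PX y%:Z * extZ theta (y%:Z + w)%R / xi PX theta w
  else 0.

(* State S_t = S_1 + sum_{k < t} (Y_k - X_k)  (times indexed from 0) *)
Definition stateZ (mx ms my T : nat) (xs : {ffun 'I_T -> 'I_mx.+1})
    (s1 : 'I_ms.+1) (ys : {ffun 'I_T -> 'I_my.+1}) (t : 'I_T) : int :=
  (s1%:Z + \sum_(k < T | (k < t)%N) ((ys k)%:Z - (xs k)%:Z))%R.

(* Joint pmf of ((X^T, S_1), Y^T) when X_t iid ~ PX, S_1 ~ theta independent,
   and Y_t ~ b(. | W_t), W_t = S_t - X_t, S_{t+1} = S_t + Y_t - X_t. *)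
Definition joint (R : realType) (mx ms my T : nat)
    (PX : {ffun 'I_mx.+1 -> R}) (theta : {ffun 'I_ms.+1 -> R})
    (b : int -> 'I_my.+1 -> R)
    (xs1 : {ffun 'I_T -> 'I_mx.+1} * 'I_ms.+1) (ys : {ffun 'I_T -> 'I_my.+1}) : R :=
  theta xs1.2 * \prod_(t < T)
     (PX (xs1.1 t) * b (stateZ xs1.1 xs1.2 ys t - (xs1.1 t)%:Z)%R (ys t)).

Definition leak (R : realType) (mx ms my : nat)
    (PX : {ffun 'I_mx.+1 -> R}) (theta : {ffun 'I_ms.+1 -> R})
    (b : int -> 'I_my.+1 -> R) (T : nat) : R :=
  MI (joint (my := my) (T := T) PX theta b) / T%:R.

Definition leak_inf (R : realType) (mx ms my : nat)
    (PX : {ffun 'I_mx.+1 -> R}) (theta : {ffun 'I_ms.+1 -> R})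
    (b : int -> 'I_my.+1 -> R) : \bar R :=
  limn_esup (fun T => (leak PX theta b T)%:E).

(* Under b*, xi*(w) b*(y|w) = P_X(y) theta*(y + w).  Hence if S_t ~ theta*,
   the pair (W_t, Y_t) has the law of (S - X, X): Y_t ~ P_X, and the next state
   S_(t+1) = W_t + Y_t is again theta*-distributed and independent of Y_t.
   Inductively Y^T is i.i.d. P_X, and the information density of
   ((X^T, S_1), Y^T) splits into per-step terms ln (b*(Y_t|W_t) / P_X(Y_t)),
   each of mean I(W; Y) = I(S - X; X).  So L_T = J* for every T >= 1. *)

From HB Require Import structures.
From mathcomp Require Import all_boot all_order all_algebra.
From mathcomp Require Import all_classical all_reals all_analysis.
From mathcomp Require Import zify ring.
Import Order.TTheory GRing.Theory Num.Theory.
Set Implicit Arguments. Unset Strict Implicit. Unset Printing Implicit Defensive.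
Local Open Scope ring_scope.

Lemma sum_if_pred1 (R : nmodType) (I : finType) (P : pred I) (i0 : I) (c : R) :
  P =1 pred1 i0 -> \sum_(i : I) (if P i then c else 0) = c.
Proof. by move=> P1; rewrite -big_mkcond (big_pred1 i0). Qed.

Lemma sum_pair (R : nmodType) (I J : finType) (F : I * J -> R) :
  \sum_(p : I * J) F p = \sum_(i : I) \sum_(j : J) F (i, j).
Proof. by rewrite pair_bigA; apply: eq_bigr => -[]. Qed.

Lemma sum_prod_pmf (R : realType) (A : finType) (p : {ffun A -> R}) (T : nat) :
  is_pmf p -> \sum_(f : {ffun 'I_T -> A}) \prod_(t < T) p (f t) = 1.
Proof.
by case=> _ p1; rewrite -(bigA_distr_bigA (fun (_ : 'I_T) a => p a)) /= big1.
Qed.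

Section ExtendToIntegers.
Variables (R : realType) (m : nat) (p : {ffun 'I_m.+1 -> R}).

Lemma extZ_ord (i : 'I_m.+1) : extZ p i%:Z = p i.
Proof. by rewrite /= ltn_ord inord_val. Qed.

Lemma extZ_out (z : int) : (z < 0) || (m%:Z < z) -> extZ p z = 0.
Proof. by case: z => [n|n] //= h; case: ifP => // hn; move: h hn; lia. Qed.

Lemma extZ_sum (z : int) :
  extZ p z = \sum_(i : 'I_m.+1) (if z == i%:Z then p i else 0).
Proof.
case: z => [n|n] /=; last by rewrite big1.
case: ifPn => hn.
  rewrite -big_mkcond (big_pred1 (inord n)) // => i /=.
  by rewrite eqz_nat eq_sym -(inj_eq val_inj) /= inordK.
rewrite big1 // => i _; rewrite eqz_nat; case: eqP => // ni.
by move: hn; rewrite ni ltn_ord.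
Qed.

Lemma extZ_ge0 (z : int) : (forall i, 0 <= p i) -> 0 <= extZ p z.
Proof. by move=> p0; case: z => [n|n] //=; case: ifP. Qed.

End ExtendToIntegers.

Section FfunCons.
Variables (A : finType) (T : nat).

Definition fbehead (f : {ffun 'I_T.+1 -> A}) : {ffun 'I_T -> A} :=
  [ffun i => f (lift ord0 i)].

Definition fcons (a : A) (g : {ffun 'I_T -> A}) : {ffun 'I_T.+1 -> A} :=
  [ffun i => if unlift ord0 i is Some j then g j else a].

Lemma fcons0 a g : fcons a g ord0 = a.
Proof. by rewrite ffunE unlift_none. Qed.

Lemma fcons_lift a g i : fcons a g (lift ord0 i) = g i.
Proof. by rewrite ffunE liftK. Qed.

Lemma fcons_eta (f : {ffun 'I_T.+1 -> A}) : fcons (f ord0) (fbehead f) = f.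
Proof.
by apply/ffunP => i; rewrite ffunE; case: unliftP => [j ->|->]; rewrite ?ffunE.
Qed.

Lemma big_ffunS (R : nmodType) (F : {ffun 'I_T.+1 -> A} -> R) :
  \sum_(f : {ffun 'I_T.+1 -> A}) F f = \sum_(a : A) \sum_(g : {ffun 'I_T -> A}) F (fcons a g).
Proof.
rewrite pair_bigA (reindex (fun ag : A * _ => fcons ag.1 ag.2)) //=.
exists (fun f : {ffun 'I_T.+1 -> A} => (f ord0, fbehead f)) => [[a g] _|f _] /=;
  last exact: fcons_eta.
by rewrite fcons0 (_ : fbehead _ = g) //; apply/ffunP => i; rewrite ffunE fcons_lift.
Qed.

Lemma prod_fcons (R : comNzRingType) (F : A -> R) a g :
  \prod_(t < T.+1) F (fcons a g t) = F a * \prod_(t < T) F (g t).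
Proof.
by rewrite big_ord_recl fcons0; congr (_ * _); apply: eq_bigr => t _; rewrite fcons_lift.
Qed.

End FfunCons.

Definition state_from (mx my T : nat) (s : int) (xs : {ffun 'I_T -> 'I_mx.+1})
    (ys : {ffun 'I_T -> 'I_my.+1}) (t : 'I_T) : int :=
  s + \sum_(k < T | (k < t)%N) ((ys k)%:Z - (xs k)%:Z).

Lemma state_from0 mx my T s x0 y0 (xs : {ffun 'I_T -> 'I_mx.+1})
    (ys : {ffun 'I_T -> 'I_my.+1}) :
  state_from s (fcons x0 xs) (fcons y0 ys) ord0 = s.
Proof. by rewrite /state_from big_pred0 ?addr0. Qed.

Lemma state_from_lift mx my T s x0 y0 (xs : {ffun 'I_T -> 'I_mx.+1})
    (ys : {ffun 'I_T -> 'I_my.+1}) t :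
  state_from s (fcons x0 xs) (fcons y0 ys) (lift ord0 t) =
  state_from (s + y0%:Z - x0%:Z) xs ys t.
Proof.
rewrite /state_from big_mkcond big_ord_recl /= !fcons0 -!addrA; congr (_ + _).
rewrite [in RHS]big_mkcond /=; do 2 congr (_ + _); apply: eq_bigr => k _.
by rewrite /bump /= !add1n ltnS !fcons_lift.
Qed.

Section StructuredPolicy.
Variables (R : realType) (mx my ms : nat).
Hypothesis hxy : (mx <= my)%N.
Variables (PX : {ffun 'I_mx.+1 -> R}) (th : {ffun 'I_ms.+1 -> R}).
Hypotheses (hPX : is_pmf PX) (hth : is_pmf th).

Let PX_ge0 x : 0 <= PX x. Proof. by case: hPX. Qed.
Let th_ge0 s : 0 <= th s. Proof. by case: hth. Qed.

Local Notation b := (bstar (my := my) PX th).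

Lemma xiE (z : int) : xi PX th z = \sum_(x : 'I_mx.+1) PX x * extZ th (z + x%:Z).
Proof.
rewrite /xi big_mkcond /= -(pair_bigA _ (fun (x : 'I_mx.+1) (s : 'I_ms.+1) =>
   if s%:Z - x%:Z == z then PX x * th s else 0)) /=.
apply: eq_bigr => x _; rewrite extZ_sum mulr_sumr; apply: eq_bigr => s _.
rewrite (_ : (s%:Z - x%:Z == z) = (z + x%:Z == s%:Z)).
  by case: ifP; rewrite ?mulr0.
by apply/eqP/eqP; lia.
Qed.

Lemma sum_if_wval (z : int) (c : R) : - mx%:Z <= z <= ms%:Z ->
  \sum_(w : Wt mx ms) (if wval w == z then c else 0) = c.
Proof.
move=> /andP[lo hi]; have hlt : (absz (z + mx%:Z)%R < (mx + ms).+1)%N by lia.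
apply: (@sum_if_pred1 _ _ _ (Ordinal hlt)) => w /=.
apply/eqP/eqP => [wz|->]; last by rewrite /wval /=; lia.
by apply/val_inj => /=; move: wz; rewrite /wval; lia.
Qed.

Lemma xi_ge0 (z : int) : 0 <= xi PX th z.
Proof. by rewrite xiE sumr_ge0 // => x _; rewrite mulr_ge0 // extZ_ge0. Qed.

Lemma term_le_xi (w : int) (x : 'I_mx.+1) : PX x * extZ th (w + x%:Z) <= xi PX th w.
Proof.
by rewrite xiE (bigD1 x) //= lerDl sumr_ge0 // => i _; rewrite mulr_ge0 // extZ_ge0.
Qed.

Lemma xi_mul_bstar (w : int) (y : 'I_my.+1) :
  xi PX th w * b w y = extZ PX y%:Z * extZ th (y%:Z + w).
Proof.
rewrite /bstar /in_XYo; case: ifPn => [/andP[/andP[hy _] _]|hout].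
  have [xi0|xi_neq0] := eqVneq (xi PX th w) 0; last by rewrite mulrC divfK.
  apply/esym/eqP; rewrite xi0 mul0r eq_le mulr_ge0 ?extZ_ge0 // andbT -xi0.
  by rewrite -[y%:Z]/((Ordinal (hy : (y < mx.+1)%N))%:Z) extZ_ord addrC term_le_xi.
rewrite mulr0; have [hy|hy] := leqP y mx.
  by rewrite [extZ th _]extZ_out ?mulr0 //; move: hout hy; lia.
by rewrite [extZ PX _]extZ_out ?mul0r //; apply/orP; right; lia.
Qed.

Lemma bstar_ge0 (w : int) (y : 'I_my.+1) : 0 <= b w y.
Proof.
by rewrite /bstar; case: ifP => // _; rewrite divr_ge0 ?mulr_ge0 ?extZ_ge0 ?xi_ge0.
Qed.

Lemma bstar_neq0 (w : int) (y : 'I_my.+1) : b w y != 0 ->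
  [/\ xi PX th w != 0, extZ PX y%:Z != 0 & extZ th (y%:Z + w) != 0].
Proof.
move=> b_neq0; have xi_neq0 : xi PX th w != 0.
  by apply: contraNneq b_neq0 => xi0; rewrite /bstar xi0 invr0 mulr0; case: ifP.
have : extZ PX y%:Z * extZ th (y%:Z + w) != 0 by rewrite -xi_mul_bstar mulf_neq0.
by rewrite mulf_eq0 negb_or => /andP[].
Qed.

Lemma sum_extZ_PX (G : int -> R) :
  \sum_(y : 'I_my.+1) extZ PX y%:Z * G y%:Z = \sum_(x : 'I_mx.+1) PX x * G x%:Z.
Proof.
under eq_bigr do rewrite extZ_sum mulr_suml.
rewrite exchange_big /=; apply: eq_bigr => x _.
have hx : (x < my.+1)%N by apply: leq_trans (ltn_ord x) _.
rewrite -[RHS](@sum_if_pred1 _ _ (fun y : 'I_my.+1 => y%:Z == x%:Z) (Ordinal hx)) => [|y];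
  last by rewrite /= eqz_nat -(inj_eq val_inj).
by apply: eq_bigr => y _; case: eqP => [->|]; rewrite ?mul0r.
Qed.

Lemma sum_extZ_PX1 : \sum_(y : 'I_my.+1) extZ PX y%:Z = 1.
Proof.
have := sum_extZ_PX (fun _ => 1); under eq_bigr do rewrite mulr1.
by move=> ->; under eq_bigr do rewrite mulr1; case: hPX.
Qed.

Lemma bstar_sum1 (w : int) : xi PX th w != 0 -> \sum_(y : 'I_my.+1) b w y = 1.
Proof.
move=> xi_neq0; apply: (mulfI xi_neq0); rewrite mulr1 mulr_sumr.
under eq_bigr do rewrite xi_mul_bstar.
by rewrite (sum_extZ_PX (fun z => extZ th (z + w))) xiE; under eq_bigr do rewrite addrC.
Qed.

Lemma sum_th_PX_diff (F : int -> R) :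
  \sum_(s : 'I_ms.+1) \sum_(x : 'I_mx.+1) th s * PX x * F (s%:Z - x%:Z) =
  \sum_(w : Wt mx ms) xi PX th (wval w) * F (wval w).
Proof.
have split_w (s : 'I_ms.+1) (x : 'I_mx.+1) : th s * PX x * F (s%:Z - x%:Z) =
    \sum_(w : Wt mx ms) (if wval w == s%:Z - x%:Z then th s * PX x * F (wval w) else 0).
  rewrite -{1}(@sum_if_wval (s%:Z - x%:Z) (th s * PX x * F (s%:Z - x%:Z))).
    by apply: eq_bigr => w _; case: eqP => [->|].
  by have := ltn_ord x; have := ltn_ord s; lia.
under eq_bigr => s _ do under eq_bigr => x _ do rewrite split_w.
under eq_bigr do rewrite exchange_big.
rewrite exchange_big; apply: eq_bigr => w _.
rewrite xiE mulr_suml exchange_big; apply: eq_bigr => x _.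
rewrite extZ_sum mulr_sumr mulr_suml; apply: eq_bigr => s _.
rewrite (_ : (wval w == s%:Z - x%:Z) = (wval w + x%:Z == s%:Z)); last by apply/eqP/eqP; lia.
by case: ifP => _; [ring | rewrite !mulr0 mul0r].
Qed.

Lemma sum_wval_shift (y : nat) (h : int -> R) : (y <= mx)%N ->
  \sum_(w : Wt mx ms) extZ th (y%:Z + wval w) * h (wval w + y%:Z) =
  \sum_(s : 'I_ms.+1) th s * h s%:Z.
Proof.
move=> hy; have split_w (s : 'I_ms.+1) : th s * h s%:Z =
    \sum_(w : Wt mx ms) (if wval w == s%:Z - y%:Z then th s * h s%:Z else 0).
  by rewrite sum_if_wval //; have := ltn_ord s; lia.
under [RHS]eq_bigr do rewrite split_w.
rewrite [RHS]exchange_big; apply: eq_bigr => w _.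
rewrite extZ_sum mulr_suml; apply: eq_bigr => s _.
rewrite (_ : (wval w == s%:Z - y%:Z) = (y%:Z + wval w == s%:Z)); last by apply/eqP/eqP; lia.
by case: ifP => [/eqP <-|]; rewrite ?mul0r // addrC.
Qed.

(* Under b*, if S ~ theta and X ~ PX, then the output Y and the next state
   S - X + Y are independent, with laws PX and theta. *)
Lemma bstar_next_state (y : 'I_my.+1) (h : int -> R) :
  \sum_(s : 'I_ms.+1) \sum_(x : 'I_mx.+1)
     th s * PX x * (b (s%:Z - x%:Z) y * h (s%:Z - x%:Z + y%:Z)) =
  extZ PX y%:Z * \sum_(s : 'I_ms.+1) th s * h s%:Z.
Proof.
rewrite (sum_th_PX_diff (fun w => b w y * h (w + y%:Z))).
under eq_bigr do rewrite mulrA xi_mul_bstar -mulrA.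
have [hy|hy] := leqP y mx; first by rewrite -mulr_sumr sum_wval_shift.
rewrite [extZ PX _]extZ_out; last by apply/orP; right; lia.
by rewrite mul0r big1 // => w _; rewrite !mul0r.
Qed.

(* P(X^T = xs, Y^T = ys | S_1 = s) under b*. *)
Definition path_weight (T : nat) (s : int) (xs : {ffun 'I_T -> 'I_mx.+1})
    (ys : {ffun 'I_T -> 'I_my.+1}) : R :=
  \prod_(t < T) (PX (xs t) * b (state_from s xs ys t - (xs t)%:Z) (ys t)).

Lemma path_weight_cons (T : nat) (s : int) x0 y0 (xs : {ffun 'I_T -> 'I_mx.+1})
    (ys : {ffun 'I_T -> 'I_my.+1}) :
  path_weight s (fcons x0 xs) (fcons y0 ys) =
  PX x0 * b (s - x0%:Z) y0 * path_weight (s + y0%:Z - x0%:Z) xs ys.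
Proof.
rewrite /path_weight big_ord_recl state_from0 !fcons0; congr (_ * _).
by apply: eq_bigr => t _; rewrite state_from_lift !fcons_lift.
Qed.

Lemma path_weight_ge0 (T : nat) (s : int) xs ys : 0 <= path_weight (T := T) s xs ys.
Proof. by apply: prodr_ge0 => t _; rewrite mulr_ge0 ?bstar_ge0. Qed.

Lemma path_weight_neq0 (T : nat) (s : int) xs ys : path_weight (T := T) s xs ys != 0 ->
  \prod_(t < T) PX (xs t) * \prod_(t < T) extZ PX (ys t)%:Z != 0.
Proof.
move=> /prodf_neq0 w_neq0.
have factor_neq0 t : PX (xs t) != 0 /\ b (state_from s xs ys t - (xs t)%:Z) (ys t) != 0.
  by apply/andP; rewrite -negb_or -mulf_eq0 w_neq0.
rewrite mulf_neq0 //; apply/prodf_neq0 => t _; first exact: (factor_neq0 t).1.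
by have [] := bstar_neq0 (factor_neq0 t).2.
Qed.

Lemma sum_path_weight_out (T : nat) (s : int) (xs : {ffun 'I_T -> 'I_mx.+1}) :
  extZ th s != 0 ->
  \sum_(ys : {ffun 'I_T -> 'I_my.+1}) path_weight s xs ys = \prod_(t < T) PX (xs t).
Proof.
elim: T s xs => [|T IH] s xs th_s.
  under eq_bigr do rewrite /path_weight big_ord0.
  by rewrite sumr_const card_ffun !card_ord expn0 big_ord0.
rewrite -(fcons_eta xs) prod_fcons big_ffunS.
set x0 := xs ord0; set xs' := fbehead xs.
under eq_bigr do under eq_bigr do rewrite path_weight_cons.
have [PX0|PX_neq0] := eqVneq (PX x0) 0.
  by rewrite PX0 mul0r big1 // => y _; rewrite big1 // => ys _; rewrite !mul0r.
transitivity (\sum_(y0 : 'I_my.+1) b (s - x0%:Z) y0 * (PX x0 * \prod_(t < T) PX (xs' t))).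
  apply: eq_bigr => y0 _; rewrite -mulr_sumr.
  have [->|b_neq0] := eqVneq (b (s - x0%:Z) y0) 0; first by rewrite mulr0 !mul0r.
  have [_ _ th_next] := bstar_neq0 b_neq0.
  rewrite IH; first by rewrite [PX x0 * _]mulrC -mulrA.
  by move: th_next; rewrite addrCA addrA.
rewrite -mulr_suml bstar_sum1 ?mul1r //; apply: lt0r_neq0.
apply: lt_le_trans (term_le_xi _ x0); rewrite subrK mulr_gt0 //.
  by rewrite lt0r PX_neq0 PX_ge0.
by rewrite lt0r th_s extZ_ge0.
Qed.

Lemma sum_path_weight_in (T : nat) (ys : {ffun 'I_T -> 'I_my.+1}) :
  \sum_(s : 'I_ms.+1) \sum_(xs : {ffun 'I_T -> 'I_mx.+1}) th s * path_weight s%:Z xs ys =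
  \prod_(t < T) extZ PX (ys t)%:Z.
Proof.
elim: T ys => [|T IH] ys.
  rewrite big_ord0 -[RHS](proj2 hth); apply: eq_bigr => s _.
  under eq_bigr do rewrite /path_weight big_ord0 mulr1.
  by rewrite sumr_const card_ffun !card_ord expn0.
rewrite -(fcons_eta ys) (prod_fcons (fun y : 'I_my.+1 => extZ PX y%:Z)) -IH.
under [in RHS]eq_bigr do rewrite -mulr_sumr.
rewrite -(bstar_next_state _ (fun z => \sum_xs path_weight z xs (fbehead ys))).
apply: eq_bigr => s _; rewrite big_ffunS; apply: eq_bigr => x _.
rewrite !mulr_sumr; apply: eq_bigr => xs _.
by rewrite path_weight_cons !mulrA addrAC.
Qed.

Definition info_density (T : nat) (s : int) (xs : {ffun 'I_T -> 'I_mx.+1})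
    (ys : {ffun 'I_T -> 'I_my.+1}) : R :=
  ln (path_weight s xs ys / (\prod_(t < T) PX (xs t) * \prod_(t < T) extZ PX (ys t)%:Z)).

Lemma info_density_cons (T : nat) (s : int) x0 y0 (xs : {ffun 'I_T -> 'I_mx.+1})
    (ys : {ffun 'I_T -> 'I_my.+1}) :
  path_weight s (fcons x0 xs) (fcons y0 ys) != 0 ->
  info_density s (fcons x0 xs) (fcons y0 ys) =
  ln (b (s - x0%:Z) y0 / extZ PX y0%:Z) + info_density (s + y0%:Z - x0%:Z) xs ys.
Proof.
move=> w_neq0; have := path_weight_neq0 w_neq0; move: w_neq0.
rewrite /info_density path_weight_cons prod_fcons.
rewrite (prod_fcons (fun y : 'I_my.+1 => extZ PX y%:Z)).
set P := PX x0; set B := b _ _; set W := path_weight _ _ _.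
set A := \prod_(t < T) _; set Y := extZ PX _; set C := \prod_(t < T) _.
rewrite !mulf_eq0 !negb_or => /andP[/andP[hP hB] hW] /andP[/andP[_ hA] /andP[hY hC]].
have posE (v : R) : 0 <= v -> v != 0 -> v \is Num.pos by rewrite posrE lt0r => -> ->.
have hB0 : B \is Num.pos by rewrite posE ?bstar_ge0.
have hW0 : W \is Num.pos by rewrite posE ?path_weight_ge0.
have hA0 : A \is Num.pos by rewrite posE ?prodr_ge0.
have hC0 : C \is Num.pos by rewrite posE ?prodr_ge0 // => t _; rewrite extZ_ge0.
have hY0 : Y \is Num.pos by rewrite posE ?extZ_ge0.
rewrite (_ : P * B * W / (P * A * (Y * C)) = (B / Y) * (W / (A * C))); last first.
  by field; rewrite hP hA hY hC.
by rewrite lnM // posrE divr_gt0 // -posrE ?rpredM.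
Qed.

Definition cond_info (T : nat) (s : int) : R :=
  \sum_(xs : {ffun 'I_T -> 'I_mx.+1}) \sum_(ys : {ffun 'I_T -> 'I_my.+1})
    path_weight s xs ys * info_density s xs ys.

Definition info_rate : R :=
  \sum_(y : 'I_my.+1) \sum_(w : Wt mx ms)
    xi PX th (wval w) * (b (wval w) y * ln (b (wval w) y / extZ PX y%:Z)).

Lemma cond_info0 (s : int) : cond_info 0 s = 0.
Proof.
rewrite /cond_info big1 // => xs _; rewrite big1 // => ys _.
by rewrite /info_density /path_weight !big_ord0 mulr1 divr1 ln1 mulr0.
Qed.

Lemma cond_info_S (T : nat) (s : int) : cond_info T.+1 s =
  \sum_(x : 'I_mx.+1) \sum_(y : 'I_my.+1) PX x * b (s - x%:Z) y *
    (ln (b (s - x%:Z) y / extZ PX y%:Z) + cond_info T (s + y%:Z - x%:Z)).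
Proof.
rewrite /cond_info big_ffunS; apply: eq_bigr => x _.
under eq_bigr do rewrite big_ffunS.
rewrite exchange_big; apply: eq_bigr => y _ /=.
set bxy := b (s - x%:Z) y; set l := ln _.
have [b0|b_neq0] := eqVneq bxy 0.
  rewrite b0 mulr0 mul0r big1 // => xs _; rewrite big1 // => ys _.
  by rewrite path_weight_cons -/bxy b0 mulr0 !mul0r.
have [_ _ th_next] := bstar_neq0 b_neq0.
have mass1 : \sum_(xs : {ffun 'I_T -> 'I_mx.+1}) \sum_(ys : {ffun 'I_T -> 'I_my.+1})
    path_weight (s + y%:Z - x%:Z) xs ys = 1.
  rewrite -(sum_prod_pmf T hPX); apply: eq_bigr => xs _.
  by rewrite sum_path_weight_out //; move: th_next; rewrite addrCA addrA.
rewrite mulrDr -[X in X + _]mulr1 -mass1 !mulr_sumr -big_split; apply: eq_bigr => xs _.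
rewrite !mulr_sumr -big_split; apply: eq_bigr => ys _ /=.
set w' := path_weight _ xs ys; set i' := info_density _ xs ys.
rewrite (_ : PX x * bxy * l * w' + PX x * bxy * (w' * i') = PX x * bxy * w' * (l + i'));
  last by ring.
rewrite -path_weight_cons.
have [->|w_neq0] := eqVneq (path_weight s (fcons x xs) (fcons y ys)) 0; first by rewrite !mul0r.
by rewrite info_density_cons.
Qed.

Lemma cond_info_total (T : nat) :
  \sum_(s : 'I_ms.+1) th s * cond_info T s%:Z = T%:R * info_rate.
Proof.
elim: T => [|T IH]; first by rewrite mul0r big1 // => s _; rewrite cond_info0 mulr0.
under eq_bigr => s _ do rewrite cond_info_S mulr_sumr.
under eq_bigr => s _ do under eq_bigr => x _ do rewrite mulr_sumr.
under eq_bigr do rewrite exchange_big.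
rewrite exchange_big -[T.+1]add1n natrD mulrDl mul1r.
transitivity (\sum_(y : 'I_my.+1) \sum_(s : 'I_ms.+1) \sum_(x : 'I_mx.+1)
    th s * PX x * (b (s%:Z - x%:Z) y * ln (b (s%:Z - x%:Z) y / extZ PX y%:Z)) +
  \sum_(y : 'I_my.+1) \sum_(s : 'I_ms.+1) \sum_(x : 'I_mx.+1)
    th s * PX x * (b (s%:Z - x%:Z) y * cond_info T (s%:Z - x%:Z + y%:Z))).
  rewrite -big_split; apply: eq_bigr => y _; rewrite -big_split; apply: eq_bigr => s _.
  rewrite -big_split; apply: eq_bigr => x _ /=.
  by rewrite [s%:Z + _ - _]addrAC; ring.
congr (_ + _).
  apply: eq_bigr => y _.
  by rewrite (sum_th_PX_diff (fun w => b w y * ln (b w y / extZ PX y%:Z))).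
under eq_bigr do rewrite bstar_next_state.
by rewrite -mulr_suml sum_extZ_PX1 mul1r IH.
Qed.

Lemma info_rate_term (w : int) (y : 'I_my.+1) :
  xi PX th w * (b w y * ln (b w y / extZ PX y%:Z)) =
  extZ PX y%:Z * (extZ th (y%:Z + w) * ln (extZ th (y%:Z + w) / xi PX th w)).
Proof.
rewrite mulrA xi_mul_bstar mulrA.
have [->|p_neq0] := eqVneq (extZ PX y%:Z * extZ th (y%:Z + w)) 0; first by rewrite !mul0r.
have b_neq0 : b w y != 0.
  by apply: contraNneq p_neq0 => b0; rewrite -xi_mul_bstar b0 mulr0.
have [xi_neq0 PXy_neq0 _] := bstar_neq0 b_neq0.
congr (_ * ln _); rewrite -[b w y](mulKf xi_neq0) xi_mul_bstar.
by field; rewrite xi_neq0 PXy_neq0.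
Qed.

Lemma sum_wval_joint (x : 'I_mx.+1) :
  \sum_(w : Wt mx ms) PX x * extZ th (wval w + x%:Z) = PX x.
Proof.
rewrite -mulr_sumr -[RHS]mulr1; congr (_ * _).
transitivity (\sum_(s : 'I_ms.+1) th s * 1);
  last by under eq_bigr do rewrite mulr1; case: hth.
rewrite -(sum_wval_shift (fun _ => 1) (ltn_ord x : (x <= mx)%N)).
by apply: eq_bigr => w _; rewrite mulr1 addrC.
Qed.

Lemma info_rate_Jfun : info_rate = Jfun PX th.
Proof.
rewrite /info_rate exchange_big /Jfun /MI /=; apply: eq_bigr => w _.
under eq_bigr do rewrite info_rate_term.
rewrite (sum_extZ_PX (fun z =>
  extZ th (z + wval w) * ln (extZ th (z + wval w) / xi PX th (wval w)))).
apply: eq_bigr => x _; rewrite -xiE sum_wval_joint addrC.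
case: eqP => [p0|/eqP p_neq0]; first by rewrite mulrA p0 mul0r.
rewrite mulrA; congr (_ * ln _); move: p_neq0; rewrite mulf_eq0 negb_or => /andP[PX_neq0 _].
by rewrite [xi _ _ _ * _]mulrC invfM mulrACA divff ?mul1r.
Qed.

Lemma joint_path_weight (T : nat) xs (s : 'I_ms.+1) ys :
  joint PX th b (xs, s) ys = th s * path_weight (T := T) s%:Z xs ys.
Proof. by []. Qed.

Lemma joint_marginal_out (T : nat) (xs : {ffun 'I_T -> 'I_mx.+1}) (s : 'I_ms.+1) :
  th s != 0 ->
  \sum_(ys : {ffun 'I_T -> 'I_my.+1}) joint PX th b (xs, s) ys = th s * \prod_(t < T) PX (xs t).
Proof.
move=> th_neq0; under eq_bigr do rewrite joint_path_weight.
by rewrite -mulr_sumr sum_path_weight_out ?extZ_ord.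
Qed.

Lemma joint_marginal_in (T : nat) (ys : {ffun 'I_T -> 'I_my.+1}) :
  \sum_(a : {ffun 'I_T -> 'I_mx.+1} * 'I_ms.+1) joint PX th b a ys =
  \prod_(t < T) extZ PX (ys t)%:Z.
Proof. by rewrite sum_pair exchange_big -[RHS]sum_path_weight_in. Qed.

Lemma MI_joint (T : nat) :
  MI (joint (my := my) (T := T) PX th b) = \sum_(s : 'I_ms.+1) th s * cond_info T s%:Z.
Proof.
rewrite /MI sum_pair exchange_big /=; apply: eq_bigr => s _.
rewrite /cond_info mulr_sumr; apply: eq_bigr => xs _.
rewrite mulr_sumr; apply: eq_bigr => ys _.
rewrite joint_marginal_in; have [th0|th_neq0] := eqVneq (th s) 0.
  by rewrite joint_path_weight th0 !mul0r; case: ifP.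
rewrite (joint_marginal_out xs th_neq0) joint_path_weight mulf_eq0 (negPf th_neq0) /=.
have [->|w_neq0] := eqVneq (path_weight s%:Z xs ys) 0; first by rewrite !mul0r mulr0.
rewrite -mulrA /info_density; congr (_ * (_ * ln _)).
by rewrite -[X in _ / X]mulrA -mulf_div divff ?mul1r.
Qed.

Lemma leak_bstar (T : nat) : (0 < T)%N -> leak PX th b T = Jfun PX th.
Proof.
move=> T_gt0; rewrite /leak MI_joint cond_info_total info_rate_Jfun mulrC mulKf //.
by rewrite pnatr_eq0 -lt0n.
Qed.

Lemma leak_inf_bstar : leak_inf PX th b = (Jfun PX th)%:E.
Proof.
apply: (cvg_limn_einf_sup _).2; apply: cvg_near_cst.
by exists 1%N => // T /= T_gt0; rewrite leak_bstar.
Qed.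

End StructuredPolicy.

Unset Implicit Arguments.

Theorem proposition3 (R : realType) (mx my ms : nat) (hxy : (mx <= my)%N)
    (PX : {ffun 'I_mx.+1 -> R}) (hPX : is_pmf PX)
    (thetas : {ffun 'I_ms.+1 -> R}) (hth : is_pmf thetas)
    (hmin : forall theta : {ffun 'I_ms.+1 -> R},
              is_pmf theta -> Jfun PX thetas <= Jfun PX theta) :
  let Jstar := Jfun PX thetas in
  let xistar := xi PX thetas in
  let bst := bstar (my := my) PX thetas in
  [/\ (forall w : int, xistar w =
         \sum_(xs : 'I_mx.+1 * 'I_ms.+1 | ((xs.2)%:Z - (xs.1)%:Z == w)%R)
            PX xs.1 * thetas xs.2),
      structured PX thetas xistar bst &
      leak_inf PX thetas bst = (Jstar)%:E].
Proof. by split => //; exact: leak_inf_bstar. Qed.
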